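(* Let $I=[a,b]\subset\mathbb R$ with $a<b$, and let $f:I\to I$ be a continuous increasing function such that $f(a)=a$, $f(b)=b$ and $f(x)\neq x$ for all $x\in\,]a,b[$. Then ${\rm h_{pol}}(f)=1$.
   Context: $I$ carries the usual metric $d(x,y)=|x-y|$. Polynomial entropy: with $d_n^f(x,y)=\max_{0\le k\le n-1}d(f^k(x),f^k(y))$ and $G_n^f(\varepsilon)$ the minimal number of $d_n^f$-balls of radius $\varepsilon$ covering $I$, ${\rm h_{pol}}(f)=\lim_{\varepsilon\to0}\limsup_{n\to\infty}\frac{\log G_n^f(\varepsilon)}{\log n}$. *)

From HB Require Import structures.
From mathcomp Require Import all_boot all_order all_algebra.
From mathcomp Require Import all_classical all_reals all_analysis.
Set Implicit Arguments. Unset Strict Implicit. Unset Printing Implicit Defensive.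
Import Order.TTheory GRing.Theory Num.Theory.
Import numFieldNormedType.Exports.
Local Open Scope classical_set_scope.
Local Open Scope ring_scope.

Definition dn (R : realType) (f : R -> R) (n : nat) (x y : R) : R :=
  \big[Num.max/0]_(k < n) `|iter k f x - iter k f y|.

Definition covers (R : realType) (f : R -> R) (a b : R) (n : nat) (eps : R)
    (m : nat) : Prop :=
  exists s : seq R, size s = m /\ all (fun x => x \in `[a, b]) s /\
    forall y, y \in `[a, b] -> has (fun x => dn f n x y < eps) s.

Definition Gn (R : realType) (f : R -> R) (a b : R) (n : nat) (eps : R) : R :=
  inf [set (m%:R : R) | m in covers f a b n eps].

Definition hpol_eps (R : realType) (f : R -> R) (a b : R) (eps : R) : \bar R :=
  limn_esup (fun n : nat => (ln (Gn f a b n eps) / ln (n%:R))%:E).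

(* Conjugating by x |-> -x if necessary, f lies above the diagonal on ]a, b[.
   Lower bound: if 2 eps <= f c - c, a backward orbit x_0 = c, f x_(j+1) = x_j is
   (n, 2 eps)-separated, because f^j x_i = f^(j-i) c >= f c while f^j x_j = c;
   hence G_n >= n.
   Upper bound: put p = a + eps/2, q = b - eps/2 and pick N with f^N p >= q.  An
   orbit stays in [a, p[ up to its entry time j, during the next N steps it is
   controlled up to eps by the nondecreasing orbit sum S_N (f^j y), and afterwards
   it stays in [q, b].  Coding y by (j, floor (S_N (f^j y) / eps)) gives
   G_n <= 1 + n K, so log G_n / log n tends to 1 for every small eps. *)

From HB Require Import structures.
From mathcomp Require Import all_boot all_order all_algebra.
From mathcomp Require Import all_classical all_reals all_analysis.
From mathcomp Require Import ring lra.
Import Order.TTheory GRing.Theory Num.Theory.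
Import numFieldNormedType.Exports.
Local Open Scope classical_set_scope.
Local Open Scope ring_scope.
Set Implicit Arguments. Unset Strict Implicit.

Section BowenMetric.
Variables (R : realType) (f : R -> R) (n : nat).

Lemma dn_ge_iter x y k : (k < n)%N -> `|iter k f x - iter k f y| <= dn f n x y.
Proof. by move=> kn; exact: (le_bigmax 0 (fun k : 'I_n => _) (Ordinal kn)). Qed.

Lemma dn_ge0 x y : 0 <= dn f n x y.
Proof. exact: bigmax_ge_id. Qed.

Lemma dn_lt x y eps : 0 < eps ->
  (forall k, (k < n)%N -> `|iter k f x - iter k f y| < eps) -> dn f n x y < eps.
Proof. by move=> eps0 close; apply: bigmax_lt => // k _; exact: close. Qed.

Lemma dnC x y : dn f n x y = dn f n y x.
Proof. by apply: eq_bigr => k _; rewrite distrC. Qed.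

Lemma dn_triangle x y z : dn f n x z <= dn f n x y + dn f n y z.
Proof.
apply: bigmax_le => [|k _]; first by rewrite addr_ge0 ?dn_ge0.
apply: le_trans (ler_distD (iter k f y) _ _) _.
by apply: lerD; exact: dn_ge_iter.
Qed.

End BowenMetric.

Section Covers.
Variables (R : realType) (a b : R) (f : R -> R) (n : nat) (eps : R).

Lemma covers_of_code (T : eqType) (code : R -> T) (cs : seq T) : a <= b ->
  {in `[a, b], forall y, code y \in cs} ->
  {in `[a, b] &, forall y y', code y = code y' -> dn f n y y' < eps} ->
  covers f a b n eps (size cs).
Proof.
move=> ab code_in close.
have aI : a \in `[a, b] by rewrite in_itv /= lexx.
pose rep i := xget a [set y | y \in `[a, b] /\ code y = i].
exists (map rep cs); split; first by rewrite size_map.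
split.
  by apply/allP => _ /mapP[i _ ->]; rewrite /rep; case: xgetP => // y _ [].
move=> y yI; apply/hasP; exists (rep (code y)); first by rewrite map_f ?code_in.
have [] : [set y' | y' \in `[a, b] /\ code y' = code y] (rep (code y)).
  exact: (xgetI a (conj yI erefl)).
by move=> rI rcode; apply: close.
Qed.

Lemma separated_le_covers (z : nat -> R) m :
  (forall i, (i < n)%N -> z i \in `[a, b]) ->
  (forall i j, (i < j < n)%N -> 2 * eps <= dn f n (z i) (z j)) ->
  covers f a b n eps m -> (n <= m)%N.
Proof.
move=> zI sep [s [sz [_ scov]]].
pose idx i := find (fun x => dn f n x (z i) < eps) s.
have idx_close i : (i < n)%N -> dn f n (nth 0 s (idx i)) (z i) < eps.
  by move=> iN; exact: (nth_find 0 (scov _ (zI i iN))).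
have idx_inj : {in gtn n &, injective idx}.
  suff lt_neq i j : (i < j < n)%N -> idx i <> idx j.
    move=> i j iN jN eq_ij; case: (ltngtP i j) => // ij.
    - by case: (lt_neq i j); rewrite ?ij.
    - by case: (lt_neq j i); rewrite ?ij.
  move=> /andP[ij jN] eq_ij.
  have := dn_triangle f n (z i) (nth 0 s (idx i)) (z j).
  rewrite (dnC f n (z i) (nth 0 s (idx i))); have := idx_close i (ltn_trans ij jN).
  have := idx_close j jN; rewrite -eq_ij.
  have := sep i j; rewrite ij jN => /(_ isT); lra.
have : (size (map idx (iota 0 n)) <= size (iota 0 m))%N.
  apply: uniq_leq_size; first by rewrite map_inj_in_uniq ?iota_uniq // => i j;
    rewrite !mem_iota !add0n; apply: idx_inj.
  move=> k /mapP[i]; rewrite mem_iota add0n => iN ->.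
  by rewrite mem_iota add0n -sz -has_find scov ?zI.
by rewrite size_map !size_iota.
Qed.

End Covers.

Lemma window_dist (R : realDomainType) (lo hi u v : R) :
  lo <= u <= hi -> lo <= v <= hi -> `|u - v| <= hi - lo.
Proof. by move=> /andP[? ?] /andP[? ?]; rewrite ler_norml; apply/andP; split; lra. Qed.

Lemma truncn_eq_dist (R : archiRealFieldType) (d u v : R) : 0 < d -> 0 <= u -> 0 <= v ->
  Num.truncn (u / d) = Num.truncn (v / d) -> `|u - v| < d.
Proof.
move=> d0 u0 v0 eq_t.
have := truncn_itv (divr_ge0 u0 (ltW d0)); have := truncn_itv (divr_ge0 v0 (ltW d0)).
rewrite eq_t.
rewrite !ler_pdivlMr // !ltr_pdivrMr // -natr1 mulrDl mul1r.
by move=> /andP[? ?] /andP[? ?]; rewrite ltr_norml; apply/andP; split; lra.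
Qed.

Lemma before_find_iota (P : pred nat) n k : (k < find P (iota 0 n))%N -> ~~ P k.
Proof.
move=> kP; have := before_find 0%N kP.
have kn : (k < n)%N by rewrite -(size_iota 0 n) (leq_trans kP) ?find_size.
by rewrite nth_iota // add0n => ->.
Qed.

Lemma find_iota_sat (P : pred nat) n : (find P (iota 0 n) < n)%N -> P (find P (iota 0 n)).
Proof.
move=> Pn; have hasP : has P (iota 0 n) by rewrite has_find size_iota.
by have := nth_find 0%N hasP; rewrite nth_iota // add0n.
Qed.

Definition uniformly_displaced (R : realType) (f : R -> R) (a b : R) :=
  forall p q, a < p -> q < b ->
  exists2 d, 0 < d & {in `[p, q], forall x, d <= `|f x - x|}.

Section Orbits.
Variables (R : realType) (a b : R) (f : R -> R).
Hypothesis f_maps : {homo f : x / x \in `[a, b]}.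
Hypothesis f_incr : {in `[a, b] &, {homo f : x y / x < y}}.
Hypothesis f_ge : {in `[a, b], forall x, x <= f x}.

Lemma iter_homo k : {in `[a, b] &, {homo iter k f : x y / x <= y}}.
Proof.
elim: k => [|k IH] x y xI yI xy //=.
have := IH x y xI yI xy; rewrite le_eqVlt => /orP[/eqP->//|lt].
by apply/ltW/f_incr => //; exact: iter_in.
Qed.

Lemma iter_ge x k l : x \in `[a, b] -> (k <= l)%N -> iter k f x <= iter l f x.
Proof.
move=> xI /subnK <-; elim: (l - k)%N => [|m IH] /=; first exact: lexx.
by apply: le_trans IH _; apply/f_ge/iter_in.
Qed.

Definition orbit_sum (N : nat) (x : R) : R := \sum_(m < N) iter m f x.

Lemma orbit_sum_homo N : {in `[a, b] &, {homo orbit_sum N : x y / x <= y}}.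
Proof. by move=> x y xI yI xy; apply: ler_sum => m _; apply: iter_homo. Qed.

Lemma dist_iter_le_orbit_sum N m x y : (m < N)%N -> x \in `[a, b] -> y \in `[a, b] ->
  `|iter m f x - iter m f y| <= `|orbit_sum N x - orbit_sum N y|.
Proof.
move=> mN; wlog xy : x y / x <= y => [wlog xI yI|xI yI].
  case/orP: (le_total x y) => [xy|yx]; first exact: wlog.
  by rewrite distrC (distrC (orbit_sum N x)); apply: wlog.
rewrite distrC (distrC (orbit_sum N x)).
rewrite !ger0_norm ?subr_ge0 ?orbit_sum_homo ?iter_homo //.
rewrite /orbit_sum -sumrB (bigD1 (Ordinal mN)) //= lerDl.
by apply: sumr_ge0 => i _; rewrite subr_ge0 iter_homo.
Qed.

Section UpperBound.
Variables (eps p q : R) (N : nat).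
Hypotheses (eps_gt0 : 0 < eps) (pI : p \in `[a, b]).
Hypotheses (pa : p - a < eps) (bq : b - q < eps) (qN : q <= iter N f p).

Let entry n y := find (fun k => p <= iter k f y) (iota 0 n).
Let bucket z := Num.truncn ((orbit_sum N z - orbit_sum N p) / eps).
Let code n y :=
  if (entry n y < n)%N then Some (entry n y, bucket (iter (entry n y) f y)) else None.

Lemma close_after_entry z z' m : z \in `[a, b] -> z' \in `[a, b] ->
  p <= z -> p <= z' -> bucket z = bucket z' -> `|iter m f z - iter m f z'| < eps.
Proof.
move=> zI z'I pz pz' eq_bucket; case: (ltnP m N) => mN.
  apply: le_lt_trans (dist_iter_le_orbit_sum mN zI z'I) _.
  have -> : orbit_sum N z - orbit_sum N z' =
    (orbit_sum N z - orbit_sum N p) - (orbit_sum N z' - orbit_sum N p) by ring.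
  by apply: truncn_eq_dist; rewrite // subr_ge0 orbit_sum_homo.
have above w : w \in `[a, b] -> p <= w -> q <= iter m f w <= b.
  move=> wI pw; have := iter_in m f_maps wI; rewrite in_itv /= => /andP[_ ->].
  by rewrite (le_trans qN (le_trans (iter_ge pI mN) (iter_homo m pI wI pw))).
exact: le_lt_trans (window_dist (above z zI pz) (above z' z'I pz')) bq.
Qed.

Lemma code_close n : {in `[a, b] &, forall y y', code n y = code n y' -> dn f n y y' < eps}.
Proof.
have below w k : w \in `[a, b] -> (k < entry n w)%N -> a <= iter k f w <= p.
  move=> wI /before_find_iota; rewrite -ltNge => /ltW ->.
  by have := iter_in k f_maps wI; rewrite in_itv /= => /andP[-> _].
have close_below y y' k : y \in `[a, b] -> y' \in `[a, b] ->
    (k < entry n y)%N -> (k < entry n y')%N -> `|iter k f y - iter k f y'| < eps.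
  move=> yI y'I ky ky'.
  by apply: le_lt_trans (window_dist (below _ _ yI ky) (below _ _ y'I ky')) _.
move=> y y' yI y'I; rewrite /code.
case: ifP => Jy; case: ifP => Jy' //; last first.
  move=> _; apply: dn_lt => // k kn.
  by apply: close_below; rewrite // (leq_trans kn) // leqNgt ?Jy ?Jy'.
case=> eq_entry eq_bucket; apply: dn_lt => // k kn.
case: (ltnP k (entry n y)) => kJ; first by apply: close_below; rewrite // -eq_entry.
rewrite -(subnK kJ) !iterD; apply: close_after_entry; rewrite ?(iter_in _ f_maps) //.
- exact: (find_iota_sat Jy).
- by rewrite eq_entry; exact: (find_iota_sat Jy').
- by rewrite eq_bucket eq_entry.
Qed.

Lemma covers_linear : exists K, forall n, covers f a b n eps (1 + n * K).
Proof.
pose K := Num.truncn ((orbit_sum N b - orbit_sum N p) / eps).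
exists K.+1 => n.
pose codes := None :: [seq Some (j, i) | j <- iota 0 n, i <- iota 0 K.+1].
have -> : (1 + n * K.+1)%N = size codes.
  by rewrite /codes -cat1s size_cat size_allpairs !size_iota.
have ab : a <= b by move: pI; rewrite in_itv /= => /andP[/le_trans]; apply.
apply: (covers_of_code ab _ (@code_close n)) => y yI.
rewrite /code; case: ifP => Jn; last exact: mem_head.
apply/mem_behead/(allpairs_f (fun j i => Some (j, i))); rewrite mem_iota //= add0n ltnS.
have zI := iter_in (entry n y) f_maps yI; have := zI; rewrite in_itv /= => /andP[_ le_b].
apply: le_truncn; rewrite ler_pM2r ?invr_gt0 // lerD2r orbit_sum_homo //.
by rewrite in_itv /= lexx ab.
Qed.

End UpperBound.

Lemma backward_orbit c : {in `[a, b], forall y, exists2 x, x \in `[a, b] & f x = y} ->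
  c \in `[a, b] -> exists xs : nat -> R, forall j, xs j \in `[a, b] /\ iter j f (xs j) = c.
Proof.
move=> f_onto cI; pose pre y := xget a [set x | x \in `[a, b] /\ f x = y].
have preP y : y \in `[a, b] -> pre y \in `[a, b] /\ f (pre y) = y.
  move=> yI; have [x xI fx] := f_onto y yI.
  exact: (@xgetI _ a [set x | x \in `[a, b] /\ f x = y] x (conj xI fx)).
exists (fun j => iter j pre c); elim=> [|j [xjI xjc]] //.
have [preI fpre] := preP _ xjI.
by split; [exact: preI | rewrite iterSr [iter j.+1 pre c]/= fpre].
Qed.

Lemma time_le_covers c eps n m : {in `[a, b], forall y, exists2 x, x \in `[a, b] & f x = y} ->
  c \in `[a, b] -> 2 * eps <= f c - c -> covers f a b n eps m -> (n <= m)%N.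
Proof.
move=> f_onto cI fc; have [xs xsP] := backward_orbit f_onto cI.
apply: (separated_le_covers (z := xs)) => [i _|i j /andP[ij jn]]; first exact: (xsP i).1.
apply: le_trans (dn_ge_iter _ _ _ jn); apply: le_trans (ler_norm _).
rewrite -(subnK (ltnW ij)) iterD (xsP i).2 (subnK (ltnW ij)) (xsP j).2.
have : f c <= iter (j - i) f c by apply: (iter_ge (k := 1)); rewrite ?subn_gt0.
lra.
Qed.

Lemma displaced_above p q : uniformly_displaced f a b -> a < p -> q < b ->
  exists2 d, 0 < d & {in `[p, q], forall x, d <= f x - x}.
Proof.
move=> displ ap qb; have [d d_gt0 gap] := displ p q ap qb.
exists d => // x xI; rewrite -[f x - x]ger0_norm ?gap // subr_ge0 f_ge //.
by move: xI; rewrite !in_itv /= => /andP[? ?]; apply/andP; split; lra.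
Qed.

Lemma orbit_reach p q d : p \in `[a, b] -> 0 < d ->
  {in `[p, q], forall x, d <= f x - x} -> exists N, q <= iter N f p.
Proof.
move=> pI d_gt0 gap.
case: (pselect (exists N, q <= iter N f p)) => // no_reach; exfalso.
have below N : iter N f p < q.
  by rewrite ltNge; apply/negP => qN; apply: no_reach; exists N.
have climb N : p + N%:R * d <= iter N f p.
  elim: N => [|N IH]; first by rewrite mul0r addr0.
  have pN : p <= iter N f p := iter_ge pI (leq0n N).
  have := gap (iter N f p); rewrite in_itv /= pN ltW ?below // => /(_ isT).
  by rewrite -natr1 mulrDl mul1r /=; lra.
have [_ pb] : a <= p /\ p <= b by move: pI; rewrite in_itv /= => /andP.
have ratio_ge0 : 0 <= (b - p) / d by rewrite divr_ge0 ?subr_ge0 // ltW.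
have := truncn_itv ratio_ge0; rewrite ltr_pdivrMr //.
move: (Num.truncn _) => t /andP[_ lt_t].
have := climb t.+1; have := iter_in t.+1 f_maps pI.
by rewrite in_itv /= => /andP[_]; lra.
Qed.

End Orbits.

Lemma cvg_ln_ratio (R : realType) (g : nat -> R) (C : R) :
  (forall n, (0 < n)%N -> n%:R <= g n <= C * n%:R) ->
  ln (g n) / ln n%:R @[n --> \oo] --> (1 : R).
Proof.
move=> gP; have C_gt0 : 0 < C by have := gP 1%N isT; rewrite mulr1; lra.
apply/cvgrPdist_le => e e_gt0; near=> n.
have n_ge2 : (2 <= n)%N by near: n; exact: nbhs_infty_ge.
have n_gt1 : 1 < (n%:R : R) by rewrite ltr1n.
have ln_n_gt0 : 0 < ln (n%:R : R) by exact: ln_gt0.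
have /andP[g_ge g_le] := gP n (ltnW n_ge2).
have g_gt0 : 0 < g n by lra.
have lnC_le : ln C / e <= ln (n%:R : R).
  rewrite -[leLHS]expRK ler_ln ?posrE ?expR_gt0 //; last lra.
  by near: n; exact: nbhs_infty_ger.
rewrite ler_pdivrMr // in lnC_le.
have lng_ge : ln (n%:R : R) <= ln (g n) by rewrite ler_ln ?posrE //; lra.
have lng_le : ln (g n) <= ln C + ln (n%:R : R).
  by rewrite -lnM ?posrE ?ler_ln ?posrE //; lra.
have -> : 1 - ln (g n) / ln n%:R = - ((ln (g n) - ln n%:R) / ln n%:R).
  by field; rewrite gt_eqF.
rewrite normrN ger0_norm; last by rewrite divr_ge0 ?subr_ge0 // ltW.
by rewrite ler_pdivrMr //; lra.
Unshelve. all: by end_near.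
Qed.

Lemma Gn_sandwich (R : realType) (f : R -> R) a b n eps M :
  covers f a b n eps M -> (forall m, covers f a b n eps m -> (n <= m)%N) ->
  n%:R <= Gn f a b n eps <= M%:R.
Proof.
move=> coverM lower; apply/andP; split.
  apply: lb_le_inf; first by exists M%:R, M.
  by move=> _ [m cm <-]; rewrite ler_nat lower.
apply: ge_inf; last by exists M.
by exists 0 => _ [m _ <-]; rewrite ler0n.
Qed.

Lemma hpol_eps_linear (R : realType) (f : R -> R) a b eps K :
  (forall n, covers f a b n eps (1 + n * K)) ->
  (forall n m, covers f a b n eps m -> (n <= m)%N) ->
  hpol_eps f a b eps = 1%:E.
Proof.
move=> upper lower; rewrite /hpol_eps; apply: (cvg_limn_einf_sup _).2.
apply: cvg_EFin; first exact: nearW.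
apply: (cvg_ln_ratio (C := K.+1%:R)) => n n_gt0.
have /andP[-> /le_trans ->] := Gn_sandwich (upper n) (lower n) => //.
by rewrite -natrM ler_nat mulnC mulSn leq_add2r.
Qed.

Section Displacement.
Variables (R : realType) (a b : R) (f : R -> R).
Hypothesis f_cont : {within `[a, b], continuous f}.

Lemma continuous_displacement x1 x2 : a <= x1 -> x2 <= b ->
  {within `[x1, x2], continuous (fun x => f x - x)}.
Proof.
move=> ax1 x2b.
have sub : `[x1, x2] `<=` `[a, b].
  by move=> x /=; rewrite !in_itv /= => /andP[? ?]; apply/andP; split; lra.
have id_cont : {within `[x1, x2], continuous (@id R)}.
  by apply: continuous_subspaceT => x; exact: cvg_id.
by move=> x; apply: continuousB; [exact: (continuous_subspaceW sub f_cont) | exact: id_cont].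
Qed.

Hypothesis fixfree : {in `]a, b[, forall x, f x != x}.

Lemma uniformly_displaced_fixfree : uniformly_displaced f a b.
Proof.
move=> p q ap qb; have [pq|qp] := leP p q; last first.
  by exists 1 => // x; rewrite in_itv /= => /andP[? ?]; lra.
have cont : {within `[p, q], continuous (fun x => `|f x - x|)}.
  by move=> x; apply: cvg_norm; exact: (continuous_displacement (ltW ap) (ltW qb)).
have [c cI c_min] := EVT_min pq cont.
exists `|f c - c|; last exact: c_min.
rewrite normr_gt0 subr_eq0 fixfree //.
by move: cI; rewrite !in_itv /= => /andP[? ?]; apply/andP; split; lra.
Qed.

Lemma fixfree_side : {in `]a, b[, forall x, x < f x} \/ {in `]a, b[, forall x, f x < x}.
Proof.
have no_cross x y : x \in `]a, b[ -> y \in `]a, b[ -> x <= y ->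
    Num.min (f x - x) (f y - y) <= 0 <= Num.max (f x - x) (f y - y) -> False.
  rewrite !in_itv /= => /andP[ax xb] /andP[ay yb] xy sign.
  have [c cI fc] := IVT xy (continuous_displacement (ltW ax) (ltW yb)) sign.
  move: cI; rewrite in_itv /= => /andP[xc cy].
  have cI : c \in `]a, b[ by rewrite in_itv /=; apply/andP; split; lra.
  by have := fixfree cI; rewrite -subr_eq0 fc eqxx.
case: (pselect {in `]a, b[, forall x, x < f x}) => [|not_above]; [by left | right].
move=> y yI; rewrite ltNge; apply/negP => fy_ge; apply: not_above => x xI.
rewrite ltNge; apply/negP => fx_le.
have sign : Num.min (f x - x) (f y - y) <= 0 <= Num.max (f x - x) (f y - y).
  by rewrite ge_min le_max !subr_le0 !subr_ge0 fx_le fy_ge orbT.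
have [xy|yx] := leP x y; first exact: (no_cross x y).
by rewrite minC maxC in sign; apply: (no_cross y x) => //; exact: ltW.
Qed.

End Displacement.

Section OppConj.
Variables (R : realType) (f : R -> R).

Definition opp_conj (x : R) : R := - f (- x).

Lemma iter_opp_conj k x : iter k opp_conj x = - iter k f (- x).
Proof. by elim: k => [|k IH] /=; rewrite ?opprK // /opp_conj IH opprK. Qed.

Lemma dn_opp_conj n x y : dn opp_conj n x y = dn f n (- x) (- y).
Proof. by apply: eq_bigr => k _; rewrite !iter_opp_conj -opprD normrN. Qed.

Lemma covers_opp_conj a b n eps m :
  covers f a b n eps m -> covers opp_conj (- b) (- a) n eps m.
Proof.
move=> [s [sz [sI scov]]]; exists (map -%R s); split; first by rewrite size_map.
split.
  by apply/allP => _ /mapP[x xs ->]; rewrite -oppr_itvcc opprK (allP sI).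
move=> y; rewrite -oppr_itvcc => /scov /hasP[x xs close].
by apply/hasP; exists (- x); rewrite ?map_f // dn_opp_conj !opprK.
Qed.

Variables a b : R.

Lemma opp_conj_maps : {homo f : x / x \in `[a, b]} ->
  {homo opp_conj : x / x \in `[- b, - a]}.
Proof. by move=> f_maps x; rewrite -!oppr_itvcc opprK; apply: f_maps. Qed.

Lemma opp_conj_incr : {in `[a, b] &, {homo f : x y / x < y}} ->
  {in `[- b, - a] &, {homo opp_conj : x y / x < y}}.
Proof.
move=> f_incr x y; rewrite -!oppr_itvcc => xI yI xy.
by rewrite ltrN2 f_incr // ltrN2.
Qed.

Lemma opp_conj_onto : {in `[a, b], forall y, exists2 x, x \in `[a, b] & f x = y} ->
  {in `[- b, - a], forall y, exists2 x, x \in `[- b, - a] & opp_conj x = y}.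
Proof.
move=> f_onto y; rewrite -oppr_itvcc => /f_onto[x xI fx].
by exists (- x); rewrite ?oppr_itvcc ?opprK // /opp_conj opprK fx opprK.
Qed.

Lemma opp_conj_above : {in `]a, b[, forall x, f x < x} ->
  {in `]- b, - a[, forall x, x < opp_conj x}.
Proof. by move=> below x; rewrite -oppr_itvoo => /below; rewrite ltrNr. Qed.

Lemma uniformly_displaced_opp_conj :
  uniformly_displaced f a b -> uniformly_displaced opp_conj (- b) (- a).
Proof.
move=> displ p q bp qa; rewrite ltrNl in bp; rewrite ltrNr in qa.
have [d d_gt0 gap] := displ (- q) (- p) qa bp.
exists d => // x xI; have := gap (- x); rewrite oppr_itvcc !opprK => /(_ xI).
by rewrite /opp_conj -opprD normrN.
Qed.

End OppConj.

Lemma opp_conjK (R : realType) (f : R -> R) : opp_conj (opp_conj f) = f.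
Proof. by apply/funext => x; rewrite /opp_conj !opprK. Qed.

Lemma hpol_eps_opp_conj (R : realType) (f : R -> R) a b :
  hpol_eps (opp_conj f) (- b) (- a) = hpol_eps f a b.
Proof.
apply/funext => eps; congr limn_esup; apply/funext => n.
congr (EFin (ln _ / _)); congr inf; apply/seteqP; split => _ [m cm <-]; exists m => //.
  by have := covers_opp_conj cm; rewrite opp_conjK !opprK.
exact: covers_opp_conj.
Qed.

Lemma ge_id_closed (R : realType) (f : R -> R) a b : f a = a -> f b = b ->
  {in `]a, b[, forall x, x < f x} -> {in `[a, b], forall x, x <= f x}.
Proof.
move=> fa fb above x; rewrite in_itv /= => /andP[ax xb].
have [<-|ax'] := eqVneq a x; first by rewrite fa.
have [->|xb'] := eqVneq x b; first by rewrite fb.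
by apply/ltW/above; rewrite in_itv /= !lt_neqAle ax ax' xb xb'.
Qed.

Lemma hpol_eps_cvg1_above (R : realType) (a b : R) (f : R -> R) : a < b ->
  {homo f : x / x \in `[a, b]} -> {in `[a, b] &, {homo f : x y / x < y}} ->
  {in `[a, b], forall x, x <= f x} ->
  {in `[a, b], forall y, exists2 x, x \in `[a, b] & f x = y} ->
  uniformly_displaced f a b ->
  hpol_eps f a b eps @[eps --> 0^'+] --> (1%:E : \bar R).
Proof.
move=> ab f_maps f_incr f_ge f_onto displ.
have [c ac cb] : exists2 c, a < c & c < b by exists ((a + b) / 2); lra.
have cI : c \in `[a, b] by rewrite in_itv /= !ltW.
have [d d_gt0 gap_c] := displaced_above f_ge displ ac cb.
have fc_gt : 0 < f c - c by apply: lt_le_trans d_gt0 (gap_c c _); rewrite in_itv /= lexx.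
have := f_maps c cI; rewrite in_itv /= => /andP[_ fc_le].
apply: cvg_near_cst; near=> eps.
have eps_gt0 : 0 < eps by near: eps; exact: nbhs_right_gt.
have eps_lt : eps < (f c - c) / 2 by near: eps; apply: nbhs_right_lt; lra.
have pI : a + eps / 2 \in `[a, b] by rewrite in_itv /=; apply/andP; split; lra.
have ap : a < a + eps / 2 by lra.
have qb : b - eps / 2 < b by lra.
have [d' d'_gt0 gap] := displaced_above f_ge displ ap qb.
have [N climb] := orbit_reach f_maps f_ge pI d'_gt0 gap.
have pa : a + eps / 2 - a < eps by lra.
have bq : b - (b - eps / 2) < eps by lra.
have [K upper] := covers_linear f_maps f_incr f_ge eps_gt0 pI pa bq climb.
apply: (hpol_eps_linear upper) => n m.
by apply: (time_le_covers f_maps f_ge f_onto cI); lra.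
Unshelve. all: by end_near.
Qed.

Unset Implicit Arguments. Set Strict Implicit.

Theorem lemma3p2 (R : realType) (a b : R) (f : R -> R) :
  a < b ->
  (forall x, x \in `[a, b] -> f x \in `[a, b]) ->
  {within `[a, b], continuous f} ->
  {in `[a, b] &, {homo f : x y / x < y}} ->
  f a = a -> f b = b ->
  (forall x, x \in `]a, b[ -> f x != x) ->
  hpol_eps f a b eps @[eps --> 0^'+] --> (1%:E : \bar R).
Proof.
move=> ab f_maps f_cont f_incr fa fb fixfree.
have f_onto : {in `[a, b], forall y, exists2 x, x \in `[a, b] & f x = y}.
  move=> y; rewrite in_itv /= => /andP[ay yb]; apply: IVT (ltW ab) f_cont _.
  by rewrite fa fb ge_min le_max ay yb orbT.
have displ := uniformly_displaced_fixfree f_cont fixfree.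
case: (fixfree_side f_cont fixfree) => [above|below].
  by apply: hpol_eps_cvg1_above => //; apply: ge_id_closed.
rewrite -hpol_eps_opp_conj; apply: hpol_eps_cvg1_above.
- by rewrite ltrN2.
- exact: opp_conj_maps.
- exact: opp_conj_incr.
- by apply: ge_id_closed; rewrite /opp_conj ?opprK ?fa ?fb //; exact: opp_conj_above.
- exact: opp_conj_onto.
- exact: uniformly_displaced_opp_conj.
Qed.
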